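(* If a uniform preorder $(A,R)$ is cartesian, then $D(A,R)$ is cartesian, the singleton map $\eta:(A,R)\to D(A,R)$, $a\mapsto\{a\}$, is a cartesian morphism, and $\mathsf{fam}(D(A,R))$ is an indexed frame.
   Context: A uniform preorder is a pair $(A,R)$ with $A$ a set and $R\subseteq P(A\times A)$ such that $\mathrm{id}_A\in R$, $s\circ r\in R$ whenever $r,s\in R$, and $s\in R$ whenever $r\in R$ and $s\subseteq r$. A monotone map $f:(A,R)\to(B,S)$ is a function with $\{(fa,fa')\mid(a,a')\in r\}\in S$ for all $r\in R$; for monotone $f,g$, $f\le g$ iff $\{(fa,ga)\mid a\in A\}\in S$. This gives a locally ordered category $\mathsf{UOrd}$ with finite 2-products (terminal: a singleton; product $(A\times B,R\otimes S)$ where $R\otimes S$ consists of relations contained in some $r\times s$, $r\in R,s\in S$). Adjunction $f\dashv g$ means $\mathrm{id}\le g\circ f$ and $f\circ g\le\mathrm{id}$. An object is cartesian if the terminal projection and diagonal have right adjoints $\top:1\to A$ and $\wedge:A\times A\to A$; a morphism $f$ between cartesian objects is cartesian if $f\circ\wedge\cong\wedge\circ(f\times f)$ and $f\circ\top\cong\top$. $D(A,R)=(PA,DR)$ with $PA$ the powerset and $DR$ the relations on $PA$ contained in some $[r]=\{(U,V)\mid\forall a\in U\,\exists b\in V.\,(a,b)\in r\}$, $r\in R$. $\mathsf{fam}(A,R)$ is the indexed preorder (pseudofunctor $\mathsf{Set}^{op}\to\mathsf{Ord}$) $I\mapsto(A^I,\le)$ with $\varphi\le\psi$ iff $\{(\varphi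 i,\psi i)\mid i\in I\}\in R$, reindexing by precomposition. An indexed frame is an indexed preorder $\mathcal{H}$ whose fibers have finite meets preserved by reindexing, which has existential quantification (left adjoints $\exists_u\dashv u^*$ satisfying the Beck–Chevalley condition for pullbacks in $\mathsf{Set}$), and which satisfies Frobenius: $\varphi\wedge\exists_u\psi\cong\exists_u(u^*\varphi\wedge\psi)$ for all $u:J\to I$, $\varphi\in\mathcal{H}(I)$, $\psi\in\mathcal{H}(J)$. *)

Definition rel (A : Type) := A -> A -> Prop.
Definition urel (A : Type) := rel A -> Prop.

Definition is_uniform_preorder (A : Type) (R : urel A) : Prop :=
  R (fun x y => x = y) /\
  (forall r s : rel A, R r -> R s -> R (fun x z => exists y, r x y /\ s y z)) /\
  (forall r s : rel A, R r -> (forall x y, s x y -> r x y) -> R s).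

Definition img {A B : Type} (f : A -> B) (r : rel A) : rel B :=
  fun b b' => exists a a', r a a' /\ f a = b /\ f a' = b'.

Definition monotone {A B : Type} (R : urel A) (S : urel B) (f : A -> B) : Prop :=
  forall r, R r -> S (img f r).

Definition leq {A B : Type} (S : urel B) (f g : A -> B) : Prop :=
  S (fun b b' => exists a, f a = b /\ g a = b').

Definition iso {A B : Type} (S : urel B) (f g : A -> B) : Prop :=
  leq S f g /\ leq S g f.

Definition adjoint {A B : Type} (R : urel A) (S : urel B) (f : A -> B) (g : B -> A) : Prop :=
  monotone R S f /\ monotone S R g /\
  leq R (fun a => a) (fun a => g (f a)) /\ leq S (fun b => f (g b)) (fun b => b).

(** Terminal object: a singleton; its only uniform-preorder structure is all relations. *)
Definition unitR : urel unit := fun _ => True.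
Definition bang {A : Type} : A -> unit := fun _ => tt.

Definition prodR {A B : Type} (R : urel A) (S : urel B) : urel (A * B) :=
  fun t => exists r s, R r /\ S s /\
    (forall a b a' b', t (a, b) (a', b') -> r a a' /\ s b b').

Definition diag {A : Type} : A -> A * A := fun a => (a, a).

Definition is_top {A : Type} (R : urel A) (top : unit -> A) : Prop :=
  adjoint R unitR bang top.
Definition is_meet {A : Type} (R : urel A) (meet : A * A -> A) : Prop :=
  adjoint R (prodR R R) diag meet.

Definition cartesian (A : Type) (R : urel A) : Prop :=
  (exists top, is_top R top) /\ (exists meet, is_meet R meet).

Definition fprod {A B : Type} (f : A -> B) : A * A -> B * B :=
  fun p => (f (fst p), f (snd p)).

(** Cartesian morphism between cartesian objects (with respect to any choice of
    the right adjoints, which are unique up to iso). *)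
Definition cartesian_morphism {A B : Type} (R : urel A) (S : urel B) (f : A -> B) : Prop :=
  cartesian A R /\ cartesian B S /\ monotone R S f /\
  (forall topA meetA topB meetB,
      is_top R topA -> is_meet R meetA -> is_top S topB -> is_meet S meetB ->
      iso S (fun p => f (meetA p)) (fun p => meetB (fprod f p)) /\
      iso S (fun u => f (topA u)) topB).

Definition pset (A : Type) := A -> Prop.

Definition lift {A : Type} (r : rel A) : rel (pset A) :=
  fun U V => forall a, U a -> exists b, V b /\ r a b.

Definition DR {A : Type} (R : urel A) : urel (pset A) :=
  fun t => exists r, R r /\ (forall U V, t U V -> lift r U V).

Definition eta {A : Type} (a : A) : pset A := fun x => x = a.

Section IndexedFrame.
Variable fib : Type -> Type.
Variable le : forall I : Type, fib I -> fib I -> Prop.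
Variable reix : forall (I J : Type), (J -> I) -> fib I -> fib J.
Arguments reix {I J}.

Definition fiso (I : Type) (x y : fib I) : Prop := le I x y /\ le I y x.

Definition is_indexed_preorder : Prop :=
  (forall I (x : fib I), le I x x) /\
  (forall I (x y z : fib I), le I x y -> le I y z -> le I x z) /\
  (forall I J (u : J -> I) (x y : fib I), le I x y -> le J (reix u x) (reix u y)) /\
  (forall I (x : fib I), fiso I (reix (fun i => i) x) x) /\
  (forall I J K (u : J -> I) (v : K -> J) (x : fib I),
      fiso K (reix (fun k => u (v k)) x) (reix v (reix u x))).

Definition is_pullback {I J K P : Type} (u : J -> I) (v : K -> I)
  (p : P -> J) (q : P -> K) : Prop :=
  (forall x, u (p x) = v (q x)) /\
  (forall (Z : Type) (f : Z -> J) (g : Z -> K), (forall z, u (f z) = v (g z)) ->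
     exists h : Z -> P, (forall z, p (h z) = f z /\ q (h z) = g z) /\
       forall h' : Z -> P, (forall z, p (h' z) = f z /\ q (h' z) = g z) ->
         forall z, h' z = h z).

Definition indexed_frame : Prop :=
  is_indexed_preorder /\
  exists (top : forall I, fib I) (meet : forall I, fib I -> fib I -> fib I)
         (ex : forall I J (u : J -> I), fib J -> fib I),
    (forall I (x : fib I), le I x (top I)) /\
    (forall I (x y z : fib I), le I z (meet I x y) <-> (le I z x /\ le I z y)) /\
    (forall I J (u : J -> I), fiso J (reix u (top I)) (top J)) /\
    (forall I J (u : J -> I) (x y : fib I),
        fiso J (reix u (meet I x y)) (meet J (reix u x) (reix u y))) /\
    (forall I J (u : J -> I) (y : fib J) (x : fib I),
        le I (ex I J u y) x <-> le J y (reix u x)) /\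
    (forall I J K P (u : J -> I) (v : K -> I) (p : P -> J) (q : P -> K),
        is_pullback u v p q ->
        forall y : fib J, fiso K (reix v (ex I J u y)) (ex K P q (reix p y))) /\
    (forall I J (u : J -> I) (x : fib I) (y : fib J),
        fiso I (meet I x (ex I J u y)) (ex I J u (meet J (reix u x) y))).
End IndexedFrame.

Definition fam_fib (A : Type) : Type -> Type := fun I => I -> A.
Definition fam_le {A : Type} (R : urel A) : forall I : Type, fam_fib A I -> fam_fib A I -> Prop :=
  fun I phi psi => R (fun a a' => exists i, phi i = a /\ psi i = a').
Definition fam_reix (A : Type) : forall {I J : Type}, (J -> I) -> fam_fib A I -> fam_fib A J :=
  fun I J u phi => fun j => phi (u j).


(* D(A,R) is a Hoare-style powerdomain: its top is the full subset, the meet of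
   U and V is the set {a /\ b | a in U, b in V} of pointwise meets, and
   existential quantification along u is union over the fibres of u. Every
   inequality of D(A,R) is witnessed by a relation of R built from the unit,
   counit and monotonicity witnesses of the adjunctions of A, and every
   isomorphism that is an equality of subsets is witnessed by the identity
   relation. Since right adjoints are unique up to isomorphism, comparing the
   meet and top of A, pushed through eta, with the explicit ones of D(A,R)
   suffices to show that eta is cartesian. *)

Section UniformPreorder.
Variables (A : Type) (R : urel A).
Hypothesis HR : is_uniform_preorder A R.

Lemma up_refl : R (fun x y => x = y).
Proof. exact (proj1 HR). Qed.

Lemma up_comp (r s : rel A) : R r -> R s -> R (fun x z => exists y, r x y /\ s y z).
Proof. exact (proj1 (proj2 HR) r s). Qed.

Lemma up_sub (r s : rel A) : R r -> (forall x y, s x y -> r x y) -> R s.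
Proof. exact (proj2 (proj2 HR) r s). Qed.

Lemma leq_trans {X : Type} (f g h : X -> A) : leq R f g -> leq R g h -> leq R f h.
Proof.
  intros Hfg Hgh. apply (up_sub _ _ (up_comp _ _ Hfg Hgh)).
  intros x y (a & <- & <-). exists (g a). split; eauto.
Qed.

Lemma leq_precomp {X Y : Type} (f g : X -> A) (h : Y -> X) :
  leq R f g -> leq R (fun y => f (h y)) (fun y => g (h y)).
Proof. intros H. apply (up_sub _ _ H). intros x y (a & <- & <-). eauto. Qed.

Lemma monotone_leq {B X : Type} (S : urel B) (k : B -> A) (f g : X -> B) :
  monotone S R k -> leq S f g -> leq R (fun x => k (f x)) (fun x => k (g x)).
Proof.
  intros Hk H. apply (up_sub _ _ (Hk _ H)).
  intros x y (a & <- & <-). exists (f a), (g a). eauto.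
Qed.

Lemma adjoint_right_unique {B : Type} (S : urel B) (f : A -> B) (g g' : B -> A) :
  adjoint R S f g -> adjoint R S f g' -> leq R g g'.
Proof.
  intros (_ & _ & _ & Hcounit) (_ & Hmono' & Hunit' & _).
  apply (leq_trans _ (fun b => g' (f (g b)))).
  - exact (leq_precomp (fun a => a) (fun a => g' (f a)) g Hunit').
  - exact (monotone_leq S g' _ _ Hmono' Hcounit).
Qed.

End UniformPreorder.

Section CartesianStructure.
Variables (A : Type) (R : urel A).
Hypothesis HR : is_uniform_preorder A R.

Lemma top_above (top : unit -> A) :
  is_top R top -> exists r, R r /\ forall a, r a (top tt).
Proof.
  intros (_ & _ & Hunit & _). eexists. split; [exact Hunit|].
  intros a. exists a. auto.
Qed.

Variables (m : A * A -> A).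
Hypothesis Hm : is_meet R m.

Lemma meet_below :
  exists r s, R r /\ R s /\ forall a b, r (m (a, b)) a /\ s (m (a, b)) b.
Proof.
  destruct Hm as (_ & _ & _ & r & s & Hr & Hs & Hcounit).
  exists r, s. split; [exact Hr|split; [exact Hs|]]. intros a b.
  apply (Hcounit (m (a, b)) (m (a, b)) a b). exists (a, b). auto.
Qed.

Lemma meet_monotone_rel (r s : rel A) : R r -> R s ->
  R (fun c d => exists a b a' b', r a a' /\ s b b' /\ m (a, b) = c /\ m (a', b') = d).
Proof.
  intros Hr Hs.
  assert (Hrs : prodR R R (fun p p' => r (fst p) (fst p') /\ s (snd p) (snd p'))).
  { exists r, s. auto. }
  apply (up_sub _ _ HR _ _ (proj1 (proj2 Hm) _ Hrs)).
  intros c d (a & b & a' & b' & Ha & Hb & <- & <-). exists (a, b), (a', b'). auto.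
Qed.

(* The unit c <= m (c, c) followed by monotonicity of m. *)
Lemma meet_pairing_rel (r s : rel A) : R r -> R s ->
  R (fun c d => exists a b, r c a /\ s c b /\ m (a, b) = d).
Proof.
  intros Hr Hs.
  pose proof (proj1 (proj2 (proj2 Hm))) as Hunit.
  apply (up_sub _ _ HR _ _ (up_comp _ _ HR _ _ Hunit (meet_monotone_rel _ _ Hr Hs))).
  intros c d (a & b & Ha & Hb & <-). exists (m (c, c)). split.
  - exists c. auto.
  - exists c, c, a, b. auto.
Qed.

End CartesianStructure.

Lemma diag_monotone (A : Type) (R : urel A) : monotone R (prodR R R) (@diag A).
Proof.
  intros r Hr. exists r, r. split; [exact Hr|split; [exact Hr|]].
  intros a b a' b' (x & x' & H & E & E'). injection E as <- <-. injection E' as <- <-.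
  auto.
Qed.

Section Powerset.
Variables (A : Type) (R : urel A).

Definition full : pset A := fun _ => True.

Definition pmeet (m : A * A -> A) (UV : pset A * pset A) : pset A :=
  fun c => exists a b, fst UV a /\ snd UV b /\ m (a, b) = c.

Lemma lift_incl (U V : pset A) : (forall a, U a -> V a) -> lift (fun x y => x = y) U V.
Proof. intros H a Ha. eauto. Qed.

Lemma lift_comp (r s : rel A) (U V W : pset A) :
  lift r U V -> lift s V W -> lift (fun x z => exists y, r x y /\ s y z) U W.
Proof.
  intros Hr Hs a Ha.
  destruct (Hr a Ha) as (b & Hb & Rab). destruct (Hs b Hb) as (c & Hc & Rbc). eauto.
Qed.

Lemma leq_DR {I : Type} (phi psi : I -> pset A) :
  leq (DR R) phi psi <-> exists r, R r /\ forall i, lift r (phi i) (psi i).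
Proof.
  split.
  - intros (r & Hr & L). exists r. split; auto. intros i. apply L. eauto.
  - intros (r & Hr & L). exists r. split; auto. intros U V (i & <- & <-). auto.
Qed.

Hypothesis HR : is_uniform_preorder A R.

Lemma leq_DR_incl {I : Type} (phi psi : I -> pset A) :
  (forall i a, phi i a -> psi i a) -> leq (DR R) phi psi.
Proof.
  intros H. apply leq_DR. exists (fun x y => x = y).
  split; [exact (up_refl _ _ HR)|]. intros i. apply lift_incl, H.
Qed.

Lemma DR_uniform_preorder : is_uniform_preorder (pset A) (DR R).
Proof.
  split; [|split].
  - exists (fun x y => x = y). split; [exact (up_refl _ _ HR)|].
    intros U V <-. apply lift_incl. auto.
  - intros t1 t2 (r1 & H1 & L1) (r2 & H2 & L2).
    exists (fun x z => exists y, r1 x y /\ r2 y z). split; [exact (up_comp _ _ HR _ _ H1 H2)|].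
    intros U W (V & T1 & T2). exact (lift_comp _ _ _ _ _ (L1 _ _ T1) (L2 _ _ T2)).
  - intros t s (r & Hr & L) Hs. exists r. auto.
Qed.

Lemma DR_top : is_top (DR R) (fun _ => full).
Proof.
  split; [|split; [|split]].
  - intros r _. exact I.
  - intros r _. exists (fun x y => x = y). split; [exact (up_refl _ _ HR)|].
    intros U V (a & a' & _ & <- & <-). apply lift_incl. auto.
  - apply leq_DR_incl. intros. exact I.
  - exact I.
Qed.

Variables (m : A * A -> A).
Hypothesis Hm : is_meet R m.

Lemma pmeet_below : exists r s, R r /\ R s /\
  forall U V, lift r (pmeet m (U, V)) U /\ lift s (pmeet m (U, V)) V.
Proof.
  destruct (meet_below _ _ _ Hm) as (r & s & Hr & Hs & L).
  exists r, s. split; [exact Hr|split; [exact Hs|]].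
  intros U V. split; intros c (a & b & Ha & Hb & <-).
  - exists a. split; [exact Ha|apply L].
  - exists b. split; [exact Hb|apply L].
Qed.

Lemma DR_meet : is_meet (DR R) (pmeet m).
Proof.
  split; [|split; [|split]].
  - apply diag_monotone.
  - intros t (t1 & t2 & (r1 & Hr1 & L1) & (r2 & Hr2 & L2) & L).
    eexists. split; [exact (meet_monotone_rel _ _ HR _ Hm _ _ Hr1 Hr2)|].
    intros U V ([U1 U2] & [V1 V2] & Ht & <- & <-) c (a & b & Ha & Hb & <-).
    destruct (L _ _ _ _ Ht) as [T1 T2]. simpl in *.
    destruct (L1 _ _ T1 a Ha) as (a' & Ha' & Ra). destruct (L2 _ _ T2 b Hb) as (b' & Hb' & Rb).
    exists (m (a', b')). split.
    + exists a', b'. auto.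
    + exists a, b, a', b'. auto.
  - apply leq_DR. exists (fun x y => exists a, a = x /\ m (diag a) = y).
    split; [exact (proj1 (proj2 (proj2 Hm)))|].
    intros U c Hc. exists (m (c, c)). split.
    + exists c, c. auto.
    + exists c. auto.
  - destruct pmeet_below as (r & s & Hr & Hs & L).
    exists (lift r), (lift s). split; [exists r; auto|split; [exists s; auto|]].
    intros U V U' V' ([U0 V0] & E & E'). injection E as <- <-. injection E' as <- <-.
    apply L.
Qed.

End Powerset.

Arguments full {A}.
Arguments pmeet {A} m UV.

Lemma DR_cartesian (A : Type) (R : urel A) :
  is_uniform_preorder A R -> cartesian A R -> cartesian (pset A) (DR R).
Proof.
  intros HR (_ & m & Hm). split.
  - eexists. exact (DR_top _ _ HR).
  - eexists. exact (DR_meet _ _ HR _ Hm).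
Qed.

Section Eta.
Variables (A : Type) (R : urel A).
Hypothesis HR : is_uniform_preorder A R.

Lemma eta_monotone : monotone R (DR R) (@eta A).
Proof.
  intros r Hr. exists r. split; auto.
  intros U V (a & a' & Ha & <- & <-) x ->. exists a'. split; [reflexivity|exact Ha].
Qed.

(* Both sides are compared with [pmeet meetA], to which [eta] maps [meetA]
   on the nose and which is isomorphic to [meetB] as a right adjoint. *)
Lemma eta_meet_iso (meetA : A * A -> A) (meetB : pset A * pset A -> pset A) :
  is_meet R meetA -> is_meet (DR R) meetB ->
  iso (DR R) (fun p => eta (meetA p)) (fun p => meetB (fprod (@eta A) p)).
Proof.
  intros HmA HmB.
  pose proof (DR_uniform_preorder _ _ HR) as HD.
  pose proof (DR_meet _ _ HR _ HmA) as HmD.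
  split.
  - apply (leq_trans _ _ HD _ (fun p => pmeet meetA (fprod (@eta A) p))).
    + apply (leq_DR_incl _ _ HR). intros [a b] c ->. exists a, b. repeat split.
    + apply (leq_precomp _ _ HD). exact (adjoint_right_unique _ _ HD _ _ _ _ HmD HmB).
  - apply (leq_trans _ _ HD _ (fun p => pmeet meetA (fprod (@eta A) p))).
    + apply (leq_precomp _ _ HD). exact (adjoint_right_unique _ _ HD _ _ _ _ HmB HmD).
    + apply (leq_DR_incl _ _ HR). intros [a b] c (x & y & Hx & Hy & <-).
      cbv [fprod eta fst snd] in Hx, Hy. subst. reflexivity.
Qed.

Lemma eta_top_iso (topA : unit -> A) (topB : unit -> pset A) :
  is_top R topA -> is_top (DR R) topB ->
  iso (DR R) (fun u => eta (topA u)) topB.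
Proof.
  intros HtA HtB.
  pose proof (DR_uniform_preorder _ _ HR) as HD.
  pose proof (DR_top _ _ HR) as HtD.
  split.
  - apply (leq_trans _ _ HD _ (fun _ => full)).
    + apply (leq_DR_incl _ _ HR). intros. exact I.
    + exact (adjoint_right_unique _ _ HD _ _ _ _ HtD HtB).
  - apply (leq_trans _ _ HD _ (fun _ => full)).
    + exact (adjoint_right_unique _ _ HD _ _ _ _ HtB HtD).
    + destruct (top_above _ _ _ HtA) as (r & Hr & L).
      apply leq_DR. exists r. split; auto.
      intros [] a _. exists (topA tt). split; [reflexivity|apply L].
Qed.

Lemma eta_cartesian_morphism : cartesian A R -> cartesian_morphism R (DR R) (@eta A).
Proof.
  intros C. split; [exact C|split; [exact (DR_cartesian _ _ HR C)|split]].
  - exact eta_monotone.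
  - intros topA meetA topB meetB HtA HmA HtB HmB.
    split; [apply eta_meet_iso | apply eta_top_iso]; assumption.
Qed.

End Eta.

Section FamilyFrame.
Variables (A : Type) (R : urel A).
Hypothesis HR : is_uniform_preorder A R.

Let HD : is_uniform_preorder (pset A) (DR R) := DR_uniform_preorder _ _ HR.

Lemma fam_DR_indexed_preorder :
  is_indexed_preorder (fam_fib (pset A)) (fam_le (DR R)) (@fam_reix (pset A)).
Proof.
  split; [|split; [|split; [|split]]].
  - intros I x. apply (leq_DR_incl _ _ HR). auto.
  - intros I x y z. exact (leq_trans _ _ HD x y z).
  - intros I J u x y. exact (leq_precomp _ _ HD x y u).
  - intros I x. split; apply (leq_DR_incl _ _ HR); auto.
  - intros I J K u v x. split; apply (leq_DR_incl _ _ HR); auto.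
Qed.

Definition fam_top (I : Type) : I -> pset A := fun _ => full.

Definition fam_exists (I J : Type) (u : J -> I) (y : J -> pset A) : I -> pset A :=
  fun i a => exists j, u j = i /\ y j a.

Lemma fam_top_greatest (I : Type) (x : I -> pset A) : fam_le (DR R) I x (fam_top I).
Proof. apply (leq_DR_incl _ _ HR). intros. constructor. Qed.

Lemma fam_top_reix (I J : Type) (u : J -> I) :
  fiso _ (fam_le (DR R)) J (fam_reix _ u (fam_top I)) (fam_top J).
Proof. split; apply (leq_DR_incl _ _ HR); auto. Qed.

Lemma fam_exists_adjoint (I J : Type) (u : J -> I) (y : J -> pset A) (x : I -> pset A) :
  fam_le (DR R) I (fam_exists I J u y) x <-> fam_le (DR R) J y (fam_reix _ u x).
Proof.
  split; intros (r & Hr & L)%leq_DR; apply leq_DR; exists r; split; auto.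
  - intros j a Ha. apply (L (u j) a). exists j. auto.
  - intros i a (j & <- & Ha). exact (L j a Ha).
Qed.

Lemma fam_exists_beck_chevalley (I J K P : Type) (u : J -> I) (v : K -> I)
  (p : P -> J) (q : P -> K) : is_pullback u v p q -> forall y : J -> pset A,
  fiso _ (fam_le (DR R)) K (fam_reix _ v (fam_exists I J u y))
    (fam_exists K P q (fam_reix _ p y)).
Proof.
  intros (Hsq & Huniv) y. split; apply (leq_DR_incl _ _ HR).
  - intros k a (j & E & Ha).
    destruct (Huniv unit (fun _ => j) (fun _ => k) (fun _ => E)) as (h & Hh & _).
    destruct (Hh tt) as [Ep Eq]. exists (h tt). split; [exact Eq|].
    unfold fam_reix. rewrite Ep. exact Ha.
  - intros k a (x & <- & Ha). exists (p x). split; [apply Hsq|exact Ha].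
Qed.

Variables (m : A * A -> A).
Hypothesis Hm : is_meet R m.

Definition fam_meet (I : Type) (x y : I -> pset A) : I -> pset A :=
  fun i => pmeet m (x i, y i).

Lemma fam_meet_greatest (I : Type) (x y z : I -> pset A) :
  fam_le (DR R) I z (fam_meet I x y) <-> fam_le (DR R) I z x /\ fam_le (DR R) I z y.
Proof.
  split.
  - intros Hz. destruct (pmeet_below _ _ _ Hm) as (r & s & Hr & Hs & L).
    split; apply (leq_trans _ _ HD _ _ _ Hz); apply leq_DR.
    + exists r. split; [exact Hr|]. intros i. apply L.
    + exists s. split; [exact Hs|]. intros i. apply L.
  - intros [(r1 & Hr1 & L1)%leq_DR (r2 & Hr2 & L2)%leq_DR]. apply leq_DR.
    eexists. split; [exact (meet_pairing_rel _ _ HR _ Hm _ _ Hr1 Hr2)|].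
    intros i a Ha.
    destruct (L1 i a Ha) as (b & Hb & Rb). destruct (L2 i a Ha) as (c & Hc & Rc).
    exists (m (b, c)). split; exists b, c; auto.
Qed.

Lemma fam_meet_reix (I J : Type) (u : J -> I) (x y : I -> pset A) :
  fiso _ (fam_le (DR R)) J (fam_reix _ u (fam_meet I x y))
    (fam_meet J (fam_reix _ u x) (fam_reix _ u y)).
Proof. split; apply (leq_DR_incl _ _ HR); auto. Qed.

Lemma fam_frobenius (I J : Type) (u : J -> I) (x : I -> pset A) (y : J -> pset A) :
  fiso _ (fam_le (DR R)) I (fam_meet I x (fam_exists I J u y))
    (fam_exists I J u (fam_meet J (fam_reix _ u x) y)).
Proof.
  split; apply (leq_DR_incl _ _ HR).
  - intros i c (a & b & Ha & (j & <- & Hb) & <-). exists j. split; [reflexivity|].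
    exists a, b. auto.
  - intros i c (j & <- & a & b & Ha & Hb & <-). exists a, b. split; [exact Ha|].
    split; [exists j; auto|reflexivity].
Qed.

Lemma fam_DR_indexed_frame :
  indexed_frame (fam_fib (pset A)) (fam_le (DR R)) (@fam_reix (pset A)).
Proof.
  split; [exact fam_DR_indexed_preorder|].
  exists fam_top, fam_meet, fam_exists.
  split; [exact fam_top_greatest|split; [exact fam_meet_greatest|]].
  split; [exact fam_top_reix|split; [exact fam_meet_reix|]].
  split; [exact fam_exists_adjoint|split; [exact fam_exists_beck_chevalley|]].
  exact fam_frobenius.
Qed.

End FamilyFrame.

Theorem proposition5p3 (A : Type) (R : urel A) :
  is_uniform_preorder A R ->
  cartesian A R ->
  is_uniform_preorder (pset A) (DR R) /\
  cartesian (pset A) (DR R) /\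
  cartesian_morphism R (DR R) (@eta A) /\
  indexed_frame (fam_fib (pset A)) (fam_le (DR R)) (@fam_reix (pset A)).
Proof.
  intros HR C. pose proof C as (_ & m & Hm).
  split; [exact (DR_uniform_preorder _ _ HR)|].
  split; [exact (DR_cartesian _ _ HR C)|].
  split; [exact (eta_cartesian_morphism _ _ HR C)|].
  exact (fam_DR_indexed_frame _ _ HR _ Hm).
Qed.
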